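(* Let $T \in \mathscr{B}(\mathscr{H})$ be an analytic left invertible operator with $\operatorname{ind}(T) = -n$ for a positive integer $n$, and let $\Omega_T := \{z \in \mathbb{C}: |z| < \|T^\dagger\|^{-1}\}$. Then $T^* \in B_n(\Omega_T)$.
   Context: For a left invertible $T$, $T^\dagger = (T^*T)^{-1}T^*$ is its Moore–Penrose inverse; $T$ is analytic if $\bigcap_{n\ge1}T^n\mathscr{H} = \{0\}$. For an open $\Omega \subset \mathbb{C}$ and positive integer $n$, the Cowen–Douglas class $B_n(\Omega)$ consists of $R \in \mathscr{B}(\mathscr{H})$ with: $\Omega \subset \sigma(R)$; $(R-\lambda)\mathscr{H} = \mathscr{H}$ for all $\lambda\in\Omega$; $\dim\ker(R-\lambda) = n$ for all $\lambda \in \Omega$; and the closed span of $\bigcup_{\lambda\in\Omega}\ker(R-\lambda)$ is $\mathscr{H}$. *)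

From mathcomp Require Import all_boot all_order all_algebra.
From mathcomp Require Import all_classical all_reals all_analysis.
From mathcomp Require Import complex.
Import Order.TTheory GRing.Theory Num.Theory.
Import numFieldNormedType.Exports.
Set Implicit Arguments. Unset Strict Implicit. Unset Printing Implicit Defensive.
Local Open Scope ring_scope.
Local Open Scope classical_set_scope.

Section HilbertDefs.
Variables (R : realType) (V : completeNormedModType R[i]).

(** [ip] is an inner product on V inducing its norm: linear in the first
    argument, conjugate symmetric, and <x,x> = ||x||^2.  Together with the
    completeness of V, this makes V a complex Hilbert space. *)
Definition is_inner_product (ip : V -> V -> R[i]) : Prop :=
  [/\ forall (a : R[i]) (x y z : V), ip (a *: x + y) z = a * ip x z + ip y z,
      forall x y : V, ip x y = (ip y x)^* &
      forall x : V, ip x x = `|x| ^+ 2].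

Definition bounded_op (T : V -> V) : Prop :=
  linear T /\ exists M : R[i], forall x, `|T x| <= M * `|x|.

Definition is_adjoint (ip : V -> V -> R[i]) (T S : V -> V) : Prop :=
  forall x y, ip (T x) y = ip x (S y).

Definition left_invertible (T : V -> V) : Prop :=
  exists L : V -> V, bounded_op L /\ forall x, L (T x) = x.

Definition invertible_op (T : V -> V) : Prop :=
  exists G : V -> V, bounded_op G /\ (forall x, G (T x) = x) /\ (forall x, T (G x) = x).

Definition opnorm (S : V -> V) : R :=
  sup [set complex.Re `|S x| | x in [set x : V | `|x| <= 1]].

Definition op_pow (T : V -> V) (k : nat) : V -> V := iter k T.

Definition analytic_op (T : V -> V) : Prop :=
  \bigcap_(k in [set k : nat | (1 <= k)%N]) range (op_pow T k) = [set 0].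

Definition fspan (n : nat) (e : 'I_n -> V) : set V :=
  [set \sum_(i < n) c i *: e i | c in [set: 'I_n -> R[i]]].

Definition free_family (n : nat) (e : 'I_n -> V) : Prop :=
  forall c : 'I_n -> R[i], \sum_(i < n) c i *: e i = 0 -> forall i, c i = 0.

Definition dim_eq (A : set V) (n : nat) : Prop :=
  exists e : 'I_n -> V, free_family e /\ fspan e = A.

Definition kernel (T : V -> V) : set V := [set x | T x = 0].

(** codim range T = n : there are e_1..e_n linearly independent modulo
    range T such that range T + span e = V, i.e. dim (V / range T) = n *)
Definition codim_range_eq (T : V -> V) (n : nat) : Prop :=
  exists e : 'I_n -> V,
    (forall c : 'I_n -> R[i], range T (\sum_(i < n) c i *: e i) -> forall i, c i = 0)
    /\ (forall x : V, exists y (c : 'I_n -> R[i]), x = T y + \sum_(i < n) c i *: e i).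

Definition fredholm_index (T : V -> V) (i : int) : Prop :=
  closed (range T) /\
  exists k m : nat, dim_eq (kernel T) k /\ codim_range_eq T m /\ (k%:Z - m%:Z = i)%R.

Definition spectrum (S : V -> V) : set R[i] :=
  [set lam | ~ invertible_op (fun x => S x - lam *: x)].

Definition lin_span (A : set V) : set V :=
  [set v | exists (k : nat) (c : 'I_k -> R[i]) (e : 'I_k -> V),
      (forall j, A (e j)) /\ v = \sum_(j < k) c j *: e j].

(** Cowen--Douglas class B_n(Omega) (Omega is assumed open by the user;
    here it is the disc Omega_T, which is open) *)
Definition cowen_douglas (n : nat) (Omega : set R[i]) (S : V -> V) : Prop :=
  [/\ Omega `<=` spectrum S,
      (forall lam, Omega lam -> forall y, exists x, S x - lam *: x = y),
      (forall lam, Omega lam -> dim_eq (kernel (fun x => S x - lam *: x)) n) &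
      closure (lin_span (\bigcup_(lam in Omega) kernel (fun x => S x - lam *: x))) = setT].

End HilbertDefs.

From HB Require Import structures.
From Pilot Require Import Defs.
From mathcomp Require Import all_boot all_order all_algebra.
From mathcomp Require Import all_classical all_reals all_analysis.
From mathcomp Require Import complex ring lra.
Import Order.TTheory GRing.Theory Num.Theory.
Import numFieldNormedType.Exports.
Set Implicit Arguments. Unset Strict Implicit. Unset Printing Implicit Defensive.
Local Open Scope ring_scope.
Local Open Scope classical_set_scope.

Local Notation "x %:C" := (real_complex _ x) : ring_scope.

(* Let S = T^* and D = T^dagger, so that S T D = S and D T = 1, and let Dstar
   be the adjoint of D: then S Dstar = 1 and ||Dstar|| <= ||D||.  For
   |lam| ||D|| < 1 the operator 1 - lam Dstar is invertible (Banach fixed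
   point) and S (1 - lam Dstar) = S - lam, so S - lam is onto and its kernel
   is the isomorphic preimage of ker S, whose dimension is -ind T = n since T
   is injective.  For density, a vector z orthogonal to every ker (S - lam)
   is orthogonal to ker S, the orthogonal complement of ran T, hence
   z = T (D z); then D z has the same orthogonality property (for lam <> 0
   because <z, k> = conj lam <D z, k>, and for lam = 0 by letting lam -> 0),
   so z lies in every ran T^j and vanishes by analyticity. *)

(* Norms on [V] and on [R[i]] take values in [R[i]]; [rnorm] reads them in
   [R], which is ordered totally so that [lra] and [nra] apply. *)
Definition rnorm {R : realType} {W : normedZmodType R[i]} (w : W) : R :=
  complex.Re `|w|.

Lemma real_complexD (R : realType) (a b : R) : (a + b)%:C = a%:C + b%:C.
Proof. exact: rmorphD. Qed.

Lemma real_complexM (R : realType) (a b : R) : (a * b)%:C = a%:C * b%:C.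
Proof. exact: rmorphM. Qed.

Lemma ltc0R (R : realType) (k : R) : ((0 : R[i]) < k%:C) = (0 < k).
Proof. by rewrite ltcE /= eqxx. Qed.

Section RealNorm.
Variables (R : realType) (W : normedZmodType R[i]).
Implicit Types u v w : W.

Lemma normE w : `|w| = (rnorm w)%:C.
Proof. by rewrite /rnorm RRe_real ?normr_real. Qed.

Lemma rnorm_ge0 w : 0 <= rnorm w.
Proof. by have := normr_ge0 w; rewrite normE lecE => /andP[]. Qed.

Lemma rnorm0 : rnorm (0 : W) = 0.
Proof. by rewrite /rnorm normr0. Qed.

Lemma rnorm0_eq0 w : rnorm w = 0 -> w = 0.
Proof. by move=> w0; apply/normr0_eq0; rewrite normE w0. Qed.

Lemma rnorm_gt0 w : w != 0 -> 0 < rnorm w.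
Proof.
by move=> w0; rewrite lt_neqAle rnorm_ge0 andbT eq_sym (contra_neq (@rnorm0_eq0 w)).
Qed.

Lemma ler_rnormD u v : rnorm (u + v) <= rnorm u + rnorm v.
Proof. by rewrite -lecR real_complexD -!normE ler_normD. Qed.

Lemma rnormN w : rnorm (- w) = rnorm w.
Proof. by rewrite /rnorm normrN. Qed.

Lemma rnorm_distC u v : rnorm (u - v) = rnorm (v - u).
Proof. by rewrite /rnorm distrC. Qed.

Lemma ler_rnorm_dist u v w : rnorm (u - w) <= rnorm (u - v) + rnorm (v - w).
Proof. by rewrite (le_trans _ (ler_rnormD _ _)) // addrA subrK. Qed.

Lemma rnorm_small_eq0 w : (forall e : R, 0 < e -> rnorm w < e) -> w = 0.
Proof.
move=> small; apply: rnorm0_eq0; apply/le_anti; rewrite rnorm_ge0 andbT.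
by apply/ler_addgt0Pr => e /small /ltW; rewrite add0r.
Qed.

End RealNorm.

Lemma rnormM (R : realType) (a b : R[i]) : rnorm (a * b) = rnorm a * rnorm b.
Proof. by apply: complexI; rewrite real_complexM -!normE normrM. Qed.

Definition rbounded (R : realType) (W1 W2 : normedZmodType R[i]) (f : W1 -> W2) :=
  exists M : R, forall x, rnorm (f x) <= M * rnorm x.

Lemma rnorm_real (R : realType) (k : R) : 0 <= k -> rnorm k%:C = k.
Proof. by move=> k0; rewrite /rnorm ger0_norm ?lecR. Qed.

Lemma rnorm_nat (R : realType) n : rnorm (n%:R : R[i]) = n%:R.
Proof. by rewrite /rnorm normr_nat -(rmorph_nat (real_complex R)). Qed.

Lemma rnormZ (R : realType) (V : normedModType R[i]) (c : R[i]) (v : V) :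
  rnorm (c *: v) = rnorm c * rnorm v.
Proof. by apply: complexI; rewrite real_complexM -!normE normrZ. Qed.

Lemma ball_rnorm (R : realType) (V : normedModType R[i]) (x y : V) (e : R) :
  ball x e%:C y = (rnorm (x - y) < e).
Proof. by rewrite -ball_normE /= normE ltcR. Qed.

Lemma pos_complex (R : realType) (e : R[i]) :
  0 < e -> e = (complex.Re e)%:C /\ 0 < complex.Re e.
Proof. by move=> e0; have eR := RRe_real (gtr0_real e0); split; rewrite // -ltcR eR. Qed.

Section Complete.
Variables (R : realType) (V : completeNormedModType R[i]).

Definition rcauchy (u : nat -> V) := forall e : R, 0 < e ->
  exists N, forall m n, (N <= m)%N -> (N <= n)%N -> rnorm (u m - u n) < e.

Definition rlimit (u : nat -> V) (l : V) := forall e : R, 0 < e ->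
  exists N, forall n, (N <= n)%N -> rnorm (l - u n) < e.

Lemma rcauchy_cvg (u : nat -> V) : rcauchy u -> exists l, rlimit u l.
Proof.
move=> u_cauchy; have : cvgn u.
  apply: cauchy_cvg; apply/cauchy_ballP => e /pos_complex[-> e0]; near_simpl.
  have [N uN] := u_cauchy _ e0.
  exists ([set n | (N <= n)%N], [set n | (N <= n)%N]); first by split; exists N.
  by move=> [m n] [/= Nm Nn]; rewrite ball_rnorm; exact: uN.
move=> /cvgrPdist_lt u_cvg; exists (limn u) => e e0.
have /u_cvg[N _ uN] : (0 : R[i]) < e%:C by rewrite ltc0R.
by exists N => n Nn; rewrite -ltcR -normE; exact: uN.
Qed.

Section Contraction.
Variables (F : V -> V) (q : R).
Hypotheses (q_ge0 : 0 <= q) (q_lt1 : q < 1)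
  (F_contr : forall u v, rnorm (F u - F v) <= q * rnorm (u - v)).

Local Notation y k := (iter k F 0).
Local Notation C := (rnorm (F 0)).

Lemma contraction_iter_dist n m : rnorm (y (n + m)%N - y n) <= C * q ^+ n / (1 - q).
Proof.
have q1 : 0 < 1 - q by rewrite subr_gt0.
have step k : rnorm (y k.+1 - y k) <= q ^+ k * C.
  elim: k => [|k ih]; first by rewrite subr0 expr0 mul1r.
  by apply: (le_trans (F_contr _ _)); rewrite exprS -mulrA ler_wpM2l.
suff dist : rnorm (y (n + m)%N - y n) <= C * q ^+ n * (1 - q ^+ m) / (1 - q).
  apply: (le_trans dist); rewrite ler_pM2r ?invr_gt0 //.
  rewrite ler_piMr ?mulr_ge0 ?exprn_ge0 ?rnorm_ge0 //.
  by rewrite lerBlDr lerDl exprn_ge0.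
elim: m => [|m ih]; first by rewrite addn0 subrr rnorm0 expr0 subrr mulr0 mul0r.
apply: (le_trans (ler_rnorm_dist _ (y (n + m)%N) _)).
rewrite addnS ler_pdivlMr //.
move: (step (n + m)%N) ih; rewrite exprD ler_pdivlMr // exprS.
have := exprn_ge0 n q_ge0; have := exprn_ge0 m q_ge0; have := rnorm_ge0 (F 0).
set a := q ^+ n; set b := q ^+ m => *; nra.
Qed.

Lemma contraction_iter_cauchy : rcauchy (fun k => y k).
Proof.
have q1 : 0 < 1 - q by rewrite subr_gt0.
have C0 : 0 <= C by exact: rnorm_ge0.
move=> e e0; have qe : 0 < e * (1 - q) / (C + 1) by rewrite !divr_gt0 ?mulr_gt0 //; lra.
have qn1 : `|q| < 1 by rewrite ger0_norm.
have /cvgrPdist_lt /(_ _ qe) [N _ qN] := cvg_expr qn1.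
have small k : (N <= k)%N -> C * q ^+ k / (1 - q) < e.
  move=> Nk; have := qN k Nk; rewrite /= sub0r normrN ger0_norm ?exprn_ge0 //.
  rewrite ltr_pdivlMr ?ltr_pdivrMr; last 2 first; [lra | lra |].
  have := exprn_ge0 k q_ge0; set t := q ^+ k => t0 h; nra.
suff ord a b : (N <= a)%N -> (a <= b)%N -> rnorm (y b - y a) < e.
  exists N => m n Nm Nn; have [mn|/ltnW nm] := leqP m n; last exact: ord.
  by rewrite rnorm_distC; exact: ord.
move=> Na ab; rewrite -(subnKC ab).
exact: le_lt_trans (contraction_iter_dist _ _) (small _ Na).
Qed.

Lemma contraction_fixpoint : exists x, F x = x.
Proof.
have [l yl] := rcauchy_cvg contraction_iter_cauchy.
exists l; apply/subr0_eq/rnorm_small_eq0 => e e0.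
have [N yN] := yl _ (divr_gt0 e0 (ltr0n _ 2)).
have := yN N (leqnn N); have := yN N.+1 (leqnSn N).
have := F_contr l (y N); have := ler_rnorm_dist (F l) (y N.+1) l.
have := ler_wpM2r (rnorm_ge0 (l - y N)) (ltW q_lt1).
rewrite (rnorm_distC (y N.+1)) mul1r /= => *; lra.
Qed.

End Contraction.
End Complete.

Definition subspace (K : pzRingType) (V : lmodType K) (A : set V) :=
  A 0 /\ forall c u v, A u -> A v -> A (c *: u + v).

Lemma inv_succ_small (R : realType) (e : R) : 0 < e ->
  exists N, forall n, (N <= n)%N -> n.+1%:R^-1 < e.
Proof.
move=> e0; exists (Num.truncn e^-1) => n Nn.
rewrite -(invrK e) ltf_pV2 ?posrE ?invr_gt0 ?ltr0Sn //.
by apply: lt_le_trans (truncnS_gt _) _; rewrite ler_nat ltnS.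
Qed.

Lemma le0_of_small_mul (R : realType) (a C d : R) : 0 < d ->
  (forall t, 0 < t -> t <= d -> a <= t * C) -> a <= 0.
Proof.
move=> d0 small; apply/ler_addgt0Pr => e e0; rewrite add0r.
have [dCe|eDC] := leP (d * C) e; first exact: le_trans (small d d0 (lexx d)) dCe.
have C0 : 0 < C by rewrite -(pmulr_rgt0 _ d0) (lt_trans e0).
rewrite -[e](divfK (lt0r_neq0 C0)); apply: small; first exact: divr_gt0.
by rewrite ler_pdivrMr // ltW.
Qed.

Section Operators.
Variables (R : realType) (V : completeNormedModType R[i]).

Lemma bounded_op_rbounded (F : V -> V) : bounded_op F -> rbounded F.
Proof.
move=> [_ [M FM]]; exists (rnorm M) => x; rewrite -lecR real_complexM -!normE.
by rewrite -[`|x|]normr_id -normrM ger0_norm ?(le_trans (normr_ge0 _) (FM x)).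
Qed.

Lemma invertible_op_inj (F : V -> V) : invertible_op F -> injective F.
Proof. by move=> [G [_ [GF _]]]; exact: can_inj GF. Qed.

Lemma dim_eq_neq0 (A : set V) n :
  dim_eq A n -> (0 < n)%N -> exists2 x, A x & x != 0.
Proof.
move=> [e [e_free <-]] n0; pose i0 := Ordinal n0.
pose c i : R[i] := (i == i0)%:R.
exists (\sum_(i < n) c i *: e i); first by exists c.
apply/eqP => /e_free /(_ i0); rewrite /c eqxx => /eqP; exact/negP/oner_neq0.
Qed.

Lemma lin_span_subspace (A : set V) : subspace (lin_span A).
Proof.
split; first by exists 0%N, (fun _ => 0), (fun _ => 0); split; [case | rewrite big_ord0].
move=> c _ _ [k1 [c1 [e1 [Ae1 ->]]]] [k2 [c2 [e2 [Ae2 ->]]]].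
exists (k1 + k2)%N.
exists (fun j => match fintype.split j with inl a => c * c1 a | inr b => c2 b end).
exists (fun j => match fintype.split j with inl a => e1 a | inr b => e2 b end).
split=> [j|]; first by case: (fintype.split j).
rewrite big_split_ord /= scaler_sumr; congr (_ + _); apply: eq_bigr => i _.
  by rewrite (unsplitK (inl i : 'I_k1 + 'I_k2)) scalerA.
by rewrite (unsplitK (inr i : 'I_k1 + 'I_k2)).
Qed.

Lemma sub_lin_span (A : set V) : A `<=` lin_span A.
Proof.
by move=> x Ax; exists 1%N, (fun _ => 1), (fun _ => x); split; rewrite ?big_ord1 ?scale1r.
Qed.

Section LinearOperator.
Variable F : V -> V.
Hypothesis F_lin : linear F.

HB.instance Definition _ := GRing.isLinear.Build R[i] V V *:%R F F_lin.

Lemma dim_eq_preimage (A : set V) n : injective F -> (forall y, exists x, F x = y) ->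
  dim_eq A n -> dim_eq (F @^-1` A) n.
Proof.
move=> F_inj F_surj [e [e_free e_span]].
have /choice[g Fg] i : exists x, F x = e i by exact: F_surj.
have F_sum c : F (\sum_(i < n) c i *: g i) = \sum_(i < n) c i *: e i.
  by rewrite linear_sum; apply: eq_bigr => i _; rewrite linearZ /= Fg.
exists g; split.
  by move=> c c0; apply: e_free; rewrite -F_sum c0 linear0.
apply/seteqP; split=> [_ [c _ <-]|x]; first by rewrite /preimage /= F_sum -e_span; exists c.
rewrite /preimage /= -e_span => -[c _ /esym].
by rewrite -F_sum => /F_inj ->; exists c.
Qed.

Hypothesis F_bdd : rbounded F.

Let opnorm_ub x : `|x| <= 1 -> rnorm (F x) <= opnorm F.
Proof.
have [M FM] := F_bdd; move=> x1; apply: ub_le_sup; last by exists x.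
exists `|M| => _ [y /= y1 <-]; apply: le_trans (FM y) _.
have : rnorm y <= 1 by rewrite -lecR -normE.
have := rnorm_ge0 y; move: (rnorm y) => r r0 r1.
have := ler_norm M; have := normr_ge0 M => *; nra.
Qed.

Lemma opnorm_ge0 : 0 <= opnorm F.
Proof. by apply: le_trans (rnorm_ge0 (F 0)) (opnorm_ub _); rewrite normr0. Qed.

Lemma ler_opnorm x : rnorm (F x) <= opnorm F * rnorm x.
Proof.
have [->|x0] := eqVneq x 0; first by rewrite linear0 rnorm0 mulr0.
have x_pos := rnorm_gt0 x0.
have inv_ge0 : 0 <= (rnorm x)^-1 by rewrite invr_ge0 ltW.
have u1 : `|(rnorm x)^-1%:C *: x| <= 1.
  by rewrite normE -[1]/((1 : R)%:C) lecR rnormZ rnorm_real // mulVf ?gt_eqF.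
have := opnorm_ub u1; rewrite linearZ /= rnormZ rnorm_real //.
by rewrite mulrC ler_pdivrMr // mulrC.
Qed.

End LinearOperator.
End Operators.

Lemma conjCD (C : numClosedFieldType) (a b : C) : (a + b)^* = a^* + b^*.
Proof. exact: rmorphD. Qed.

Lemma conjCM (C : numClosedFieldType) (a b : C) : (a * b)^* = a^* * b^*.
Proof. exact: rmorphM. Qed.

Section InnerProduct.
Variables (R : realType) (V : completeNormedModType R[i]) (ip : V -> V -> R[i]).
Hypothesis hip : is_inner_product ip.
Implicit Types (x y z u v w : V) (c : R[i]).

Lemma ipDl x y z : ip (x + y) z = ip x z + ip y z.
Proof. by case: hip => ipl _ _; have := ipl 1 x y z; rewrite scale1r mul1r. Qed.

Lemma ipZl c x z : ip (c *: x) z = c * ip x z.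
Proof.
case: hip => ipl _ _; have := ipl c x 0 z; rewrite addr0 => ->.
suff -> : ip 0 z = 0 by rewrite addr0.
by apply: (@addrI _ (ip 0 z)); rewrite -ipDl !addr0.
Qed.

Lemma ip_conj x y : ip x y = (ip y x)^*.
Proof. by case: hip. Qed.

Lemma ipxx_norm x : ip x x = `|x| ^+ 2.
Proof. by case: hip. Qed.

Lemma ipxx x : ip x x = (rnorm x ^+ 2)%:C.
Proof. by rewrite ipxx_norm normE; apply/esym/rmorphXn. Qed.

Lemma ip0l z : ip 0 z = 0.
Proof. by rewrite -(scale0r 0) ipZl mul0r. Qed.

Lemma ipNl x z : ip (- x) z = - ip x z.
Proof. by rewrite -scaleN1r ipZl mulN1r. Qed.

Lemma ipBl x y z : ip (x - y) z = ip x z - ip y z.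
Proof. by rewrite ipDl ipNl. Qed.

Lemma ipDr x y z : ip z (x + y) = ip z x + ip z y.
Proof. by rewrite ip_conj ipDl conjCD -!ip_conj. Qed.

Lemma ipZr c x z : ip z (c *: x) = c^* * ip z x.
Proof. by rewrite ip_conj ipZl conjCM -ip_conj. Qed.

Lemma ip0r z : ip z 0 = 0.
Proof. by rewrite ip_conj ip0l conjC0. Qed.

Lemma ipBr x y z : ip z (x - y) = ip z x - ip z y.
Proof. by rewrite -scaleN1r ipDr ipZr conjCN1 mulN1r. Qed.

Lemma ipxx_eq0 x : ip x x = 0 -> x = 0.
Proof. by rewrite ipxx => -[] /eqP; rewrite sqrf_eq0 => /eqP /rnorm0_eq0. Qed.

Lemma ip_injr x y : (forall z, ip z x = ip z y) -> x = y.
Proof. by move=> xy; apply/subr0_eq/ipxx_eq0; rewrite ipBr xy subrr. Qed.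

Lemma cauchy_schwarz x y : rnorm (ip x y) <= rnorm x * rnorm y.
Proof.
rewrite -lecR real_complexM -!normE.
have [->|y0] := eqVneq y 0; first by rewrite ip0r !normr0 mulr0.
have ny0 : `|y| != 0 by rewrite normr_eq0.
pose a := ip x y / ip y y; pose u := x - a *: y.
have uy : ip u y = 0.
  by rewrite ipBl ipZl divfK ?subrr // ipxx_norm expf_eq0 /= (negPf ny0).
have nx : `|x| ^+ 2 = `|u| ^+ 2 + `|a| ^+ 2 * `|y| ^+ 2.
  have xE : x = u + a *: y by rewrite subrK.
  clearbody u.
  rewrite -!ipxx_norm {1 2}xE ipDl !ipDr !ipZl !ipZr.
  by rewrite uy (ip_conj y u) uy conjC0 !mulr0 !addr0 add0r mulrA normCK.
have nxy : `|ip x y| = `|a| * `|y| ^+ 2.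
  by rewrite normrM normfV ipxx_norm normrX normr_id divfK // expf_neq0.
rewrite nxy -ler_sqr ?nnegrE ?mulr_ge0 ?exprn_ge0 ?normr_ge0 //.
rewrite [in leRHS]exprMn nx mulrDl.
have -> : (`|a| * `|y| ^+ 2) ^+ 2 = `|a| ^+ 2 * `|y| ^+ 2 * `|y| ^+ 2.
  by rewrite exprMn [(`|y| ^+ 2) ^+ 2]expr2 mulrA.
by rewrite lerDr mulr_ge0 ?exprn_ge0 ?normr_ge0.
Qed.

Lemma parallelogram u v :
  rnorm (u + v) ^+ 2 + rnorm (u - v) ^+ 2 = 2 * rnorm u ^+ 2 + 2 * rnorm v ^+ 2.
Proof.
apply: complexI; rewrite !(real_complexD, real_complexM) -!expr2 -!normE -!ipxx_norm.
by rewrite !ipBl !ipBr !ipDl !ipDr; ring.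
Qed.

(* Test the minimality against [c = t <w, a>] for a small real [t]. *)
Lemma orth_of_min_dist (w a : V) :
  (forall c : R[i], rnorm w <= rnorm (w - c *: a)) -> ip w a = 0.
Proof.
move=> w_min; set b := ip w a; have [//|b0] := eqVneq b 0.
have bc : b^* = (rnorm b ^+ 2)%:C / b.
  rewrite (_ : (rnorm b ^+ 2)%:C = b^* * b) ?mulfK //.
  by rewrite mulrC -normCK normE; apply: rmorphXn.
move: bc; set al := rnorm a; set be := rnorm b => bc.
have al0 : 0 <= al := rnorm_ge0 a.
pose t : R := (al ^+ 2 + 1)^-1.
have t0 : 0 < t by rewrite invr_gt0; nra.
have ta : t * al ^+ 2 < 1 by rewrite mulrC ltr_pdivrMr; nra.
have := w_min (t%:C * b); have := rnorm_ge0 w => w0 wt.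
have {w0 wt} : rnorm w ^+ 2 <= rnorm (w - (t%:C * b) *: a) ^+ 2 by nra.
have -> : rnorm (w - (t%:C * b) *: a) ^+ 2 =
    rnorm w ^+ 2 - 2 * t * be ^+ 2 + t ^+ 2 * be ^+ 2 * al ^+ 2.
  apply: complexI; rewrite -ipxx !ipBl !ipBr !ipZl !ipZr (ip_conj a w) -/b conjCM.
  rewrite conj_Creal ?complex_real ?eqxx // !ipxx -/al bc.
  by clearbody t; field.
have be0 := rnorm_ge0 b; rewrite -/be => le_w.
have h : 0 < t * (2 - t * al ^+ 2) by apply: mulr_gt0 => //; lra.
have : be ^+ 2 <= 0 by rewrite -(pmulr_lle0 _ h); nra.
by move=> be2; apply: rnorm0_eq0; rewrite -/be; nra.
Qed.

Section BestApproximation.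
Variables (A : set V) (x : V).
Hypothesis A_sub : subspace A.

Local Notation dist := (inf [set rnorm (x - a) | a in A]).

Let dist_set_ne : [set rnorm (x - a) | a in A] !=set0.
Proof. by exists (rnorm (x - 0)), 0; [case: A_sub|]. Qed.

Let dist_set_lb : has_lbound [set rnorm (x - a) | a in A].
Proof. by exists 0 => _ [a _ <-]; exact: rnorm_ge0. Qed.

Lemma dist_le a : A a -> dist <= rnorm (x - a).
Proof. by move=> Aa; apply: ge_inf => //; exists a. Qed.

Lemma dist_ge0 : 0 <= dist.
Proof. by apply: lb_le_inf => // _ [a _ <-]; exact: rnorm_ge0. Qed.

Lemma minimizing_seq_exists : exists s : nat -> V,
  forall k, A (s k) /\ rnorm (x - s k) < dist + k.+1%:R^-1.
Proof.
suff /choice[s s_min] k : exists a, A a /\ rnorm (x - a) < dist + k.+1%:R^-1.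
  by exists s.
have k_pos : 0 < k.+1%:R^-1 :> R by rewrite invr_gt0.
by have [_ [a Aa <-]] := inf_adherent k_pos (conj dist_set_ne dist_set_lb); exists a.
Qed.

Lemma dist_parallelogram a b : A a -> A b ->
  rnorm (a - b) ^+ 2 <= 2 * rnorm (x - a) ^+ 2 + 2 * rnorm (x - b) ^+ 2 - 4 * dist ^+ 2.
Proof.
move=> Aa Ab; have [A0 Acl] := A_sub.
have mid : A (2^-1 *: a + 2^-1 *: b).
  by apply: (Acl) => //; rewrite -[_ *: b]addr0; apply: Acl.
have ab : x - a + (x - b) = (2 : R[i]) *: (x - (2^-1 *: a + 2^-1 *: b)).
  rewrite scalerBr scalerDr !scalerA mulfV ?pnatr_eq0 // !scale1r scaler_nat mulr2n.
  by rewrite opprD addrACA.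
have := parallelogram (x - a) (x - b); rewrite ab rnormZ rnorm_nat.
rewrite (_ : x - a - (x - b) = b - a); last by rewrite opprB addrC addrA subrK.
have := dist_le mid; have := dist_ge0; rewrite (rnorm_distC b a) => *; nra.
Qed.

Variable s : nat -> V.
Hypotheses (s_in : forall k, A (s k))
  (s_min : forall k, rnorm (x - s k) < dist + k.+1%:R^-1).

Lemma minimizing_seq_cauchy : rcauchy s.
Proof.
have e_pos k : 0 < k.+1%:R^-1 :> R by rewrite invr_gt0.
have e_le1 k : k.+1%:R^-1 <= 1 :> R by rewrite invf_le1 ?ler1n.
move=> e e0; have K0 : 0 < 8 * dist + 4 by have := dist_ge0; lra.
have [N eN] := inv_succ_small (divr_gt0 (mulr_gt0 e0 e0) K0).
exists N => m n Nm Nn.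
have := dist_parallelogram (s_in m) (s_in n); have := s_min m; have := s_min n.
have := eN _ Nm; have := eN _ Nn; have := e_pos m; have := e_pos n.
have := e_le1 m; have := e_le1 n; have := dist_ge0.
have := rnorm_ge0 (s m - s n); have := rnorm_ge0 (x - s m); have := rnorm_ge0 (x - s n).
rewrite !ltr_pdivlMr //.
set em := m.+1%:R^-1; set en := n.+1%:R^-1 => *; nra.
Qed.

Lemma minimizing_seq_limit p : rlimit s p ->
  forall c a, A a -> rnorm (x - p) <= rnorm (x - p - c *: a).
Proof.
move=> sp c a Aa; have [_ Acl] := A_sub.
apply/ler_addgt0Pr => e e0; have e3 : 0 < e / 3 by rewrite divr_gt0.
have [N1 pN1] := sp _ e3; have [N2 sN2] := inv_succ_small e3.
pose n := maxn N1 N2.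
have := pN1 n (leq_maxl _ _); have := sN2 n (leq_maxr _ _).
have := s_min n; have := dist_le (Acl c _ _ Aa (s_in n)).
have := ler_rnorm_dist x (s n) p; rewrite (rnorm_distC (s n) p).
have := ler_rnormD (x - p - c *: a) (p - s n).
rewrite (_ : x - p - c *: a + (p - s n) = x - (c *: a + s n)); last first.
  by rewrite addrAC -(addrA x) addKr opprD addrA addrAC.
move: (n.+1%:R^-1) => t *; lra.
Qed.

End BestApproximation.

Lemma orthogonal_projection (A : set V) (x : V) : subspace A ->
  exists p (s : nat -> V), [/\ forall k, A (s k), rlimit s p &
    forall a, A a -> ip (x - p) a = 0].
Proof.
move=> A_sub; have [s s_min] := minimizing_seq_exists x A_sub.
have s_in k := (s_min k).1; have {}s_min k := (s_min k).2.
have [p sp] := rcauchy_cvg (minimizing_seq_cauchy (x := x) A_sub s_in s_min).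
exists p, s; split => // a Aa; apply: orth_of_min_dist => c.
exact: (minimizing_seq_limit (x := x) A_sub s_in s_min sp c Aa).
Qed.

Lemma dense_of_orth (A : set V) : subspace A ->
  (forall x, (forall a, A a -> ip x a = 0) -> x = 0) -> closure A = setT.
Proof.
move=> A_sub A_orth; apply/seteqP; split => // x _.
have [p [s [s_in sp /A_orth/subr0_eq ->]]] := orthogonal_projection x A_sub.
move=> B /nbhs_ballP[e /pos_complex[eE e0] eB].
have [N sN] := sp _ e0; exists (s N); split; first exact: s_in.
by apply: eB; rewrite eE ball_rnorm; exact: sN.
Qed.

Section Riesz.
Variable f : V -> R[i].
Hypotheses (f_scalar : scalar f) (f_bounded : rbounded f).

HB.instance Definition _ := GRing.isLinear.Build R[i] V R[i] *%R f f_scalar.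

Lemma riesz_representation : exists w, forall z, f z = ip z w.
Proof.
have [f0|/existsNP[x f_x]] := pselect (forall v, f v = 0).
  by exists 0 => z; rewrite f0 ip0r.
pose K := [set v | f v = 0].
have K_sub : subspace K.
  by split=> [|c u v]; rewrite /K /mkset ?linear0 // linearP /= => -> ->; rewrite mulr0 addr0.
have [p [s [s_in sp orth]]] := orthogonal_projection x K_sub.
have fp : f p = 0.
  have [M fM] := f_bounded; have M1 : 0 < `|M| + 1 by rewrite ltr_pwDr ?normr_ge0.
  apply: rnorm_small_eq0 => e e0; have [N sN] := sp _ (divr_gt0 e0 M1).
  have := fM (p - s N); rewrite linearB /= s_in subr0.
  have := sN N (leqnn N); rewrite ltr_pdivlMr //.
  have := rnorm_ge0 (p - s N); have := ler_norm M; have := normr_ge0 M => *; nra.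
pose z := x - p.
have fz : f z = f x by rewrite linearB /= fp subr0.
have zz : ip z z != 0.
  by apply/eqP => /ipxx_eq0 z0; apply: f_x; rewrite -fz z0 linear0.
exists ((f z / ip z z)^* *: z) => y.
have Kk : K (f y *: z - f z *: y).
  by rewrite /K /mkset linearB !linearZ /= -[f z *: _]/(f z * - f y) mulrN mulrC subrr.
have := orth _ Kk; rewrite -/z ip_conj ipBl !ipZl => /eqP.
rewrite conjC_eq0 subr_eq0 => /eqP hy.
by rewrite ipZr conjCK; apply: (mulIf zz); rewrite hy mulrAC divfK.
Qed.

End Riesz.

Lemma adjoint_exists (F : V -> V) : linear F -> rbounded F -> exists G, is_adjoint ip F G.
Proof.
move=> F_lin [M FM].
suff /choice[G FG] y : exists w, forall z, ip (F z) y = ip z w by exists G => z y.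
apply: (riesz_representation (f := fun z => ip (F z) y)).
  by move=> c u v; rewrite /= F_lin ipDl ipZl.
exists (M * rnorm y) => z; apply: le_trans (cauchy_schwarz _ _) _.
by rewrite mulrAC ler_wpM2r ?rnorm_ge0.
Qed.

Section Adjoint.
Variables (F G : V -> V).
Hypothesis FG : is_adjoint ip F G.

Lemma adjoint_linear : linear G.
Proof. by move=> c u v; apply: ip_injr => z; rewrite -FG ipDr ipZr ipDr ipZr -!FG. Qed.

Lemma adjoint_rnorm_le (M : R) : 0 <= M -> (forall x, rnorm (F x) <= M * rnorm x) ->
  forall y, rnorm (G y) <= M * rnorm y.
Proof.
move=> M0 FM y; have [->|/rnorm_gt0] := eqVneq (G y) 0.
  by rewrite rnorm0 mulr_ge0 ?rnorm_ge0.
have : rnorm (G y) ^+ 2 <= M * rnorm (G y) * rnorm y.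
  rewrite -(rnorm_real (exprn_ge0 2 (rnorm_ge0 _))) -ipxx -FG.
  exact: le_trans (cauchy_schwarz _ _) (ler_wpM2r (rnorm_ge0 _) (FM _)).
move: (rnorm (G y)) => g le_g g_pos.
by rewrite -(ler_pM2r g_pos) -expr2 mulrAC.
Qed.

End Adjoint.

Section CowenDouglas.
Variables (T S D : V -> V).
Hypotheses (hT : bounded_op T) (hS : bounded_op S) (hadj : is_adjoint ip T S)
  (hdag : forall x, S (T (D x)) = S x) (hli : left_invertible T).

HB.instance Definition _ := GRing.isLinear.Build R[i] V V *:%R T hT.1.
HB.instance Definition _ := GRing.isLinear.Build R[i] V V *:%R S hS.1.

Lemma T_inj x : T x = 0 -> x = 0.
Proof.
have [L [_ LT]] := hli; have T0 : T 0 = 0 := linear0 T.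
by move=> Tx; rewrite -(LT x) Tx -{1}T0 LT.
Qed.

Lemma ST_inj x : S (T x) = 0 -> x = 0.
Proof. by move=> STx; apply/T_inj/ipxx_eq0; rewrite hadj STx ip0r. Qed.

Lemma DTK : cancel T D.
Proof. by move=> x; apply/subr0_eq/ST_inj; rewrite !linearB /= hdag subrr. Qed.

Lemma dagger_linear : linear D.
Proof.
move=> c u v; apply/subr0_eq/ST_inj.
by rewrite !linearB /= hdag !linearP /= !hdag scalerN -opprD subrr.
Qed.

HB.instance Definition _ := GRing.isLinear.Build R[i] V V *:%R D dagger_linear.

Lemma dagger_kernel_S k : S k = 0 -> D k = 0.
Proof. by move=> Sk; apply: ST_inj; rewrite hdag. Qed.

Lemma ST_bounded_below :
  exists2 K : R, 0 <= K & forall x, rnorm x <= K * rnorm (S (T x)).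
Proof.
have [L [/bounded_op_rbounded [ML LM] LT]] := hli.
exists (ML ^+ 2) => [|x]; first exact: sqr_ge0.
have x0 := rnorm_ge0 x.
have Tx : rnorm x <= ML * rnorm (T x) by rewrite -{1}(LT x).
have TTx : rnorm (T x) ^+ 2 <= rnorm x * rnorm (S (T x)).
  by rewrite -(rnorm_real (exprn_ge0 2 (rnorm_ge0 _))) -ipxx hadj cauchy_schwarz.
have [->|/rnorm_gt0 x_pos] := eqVneq x 0.
  by rewrite rnorm0 mulr_ge0 ?sqr_ge0 ?rnorm_ge0.
have := rnorm_ge0 (T x); have := rnorm_ge0 (S (T x)).
move: Tx TTx x_pos x0; move: (rnorm x) (rnorm (T x)) (rnorm (S (T x))) => a b c *; nra.
Qed.

Lemma dagger_rbounded : rbounded D.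
Proof.
have [K K0 KST] := ST_bounded_below; have [MS MS_S] := bounded_op_rbounded hS.
exists (K * MS) => x; apply: le_trans (KST _) _.
by rewrite hdag -mulrA ler_wpM2l.
Qed.

Lemma codim_range_of_index n : fredholm_index T (- n%:Z) -> codim_range_eq T n.
Proof.
move=> [_ [k [m [[g [g_free g_span]] [codim /eqP]]]]].
suff k0 : k = 0%N by rewrite k0 sub0r eqr_opp => /eqP[<-].
case: k g g_free g_span {codim} => // k g g_free g_span.
have : fspan g (\sum_(i < k.+1) 1 *: g i) by exists (fun _ => 1).
by rewrite g_span => /T_inj /g_free /(_ ord0) /eqP; rewrite oner_eq0.
Qed.

Lemma kernel_S_dim n : codim_range_eq T n -> dim_eq (Defs.kernel S) n.
Proof.
(* [1 - T D] projects onto [ker S] along [ran T]. *)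
move=> [e [e_free e_span]]; pose P x := x - T (D x).
have SP x : S (P x) = 0 by rewrite /P linearB /= hdag subrr.
have P_sum (c : 'I_n -> R[i]) :
    \sum_(i < n) c i *: P (e i) = P (\sum_(i < n) c i *: e i).
  rewrite /P !linear_sum -big_split /=; apply: eq_bigr => i _.
  by rewrite !linearZ /= scalerBr scalerN.
exists (P \o e); split=> [c /eqP|].
  rewrite /= P_sum subr_eq0 => /eqP ce; apply: e_free.
  by exists (D (\sum_(i < n) c i *: e i)).
apply/seteqP; split=> [_ [c _ <-]|k Sk].
  by rewrite /Defs.kernel /= P_sum SP.
have [y [c kE]] := e_span k; exists c => //=; rewrite P_sum.
have -> : \sum_(i < n) c i *: e i = k - T y by rewrite kE addrC addKr.
by rewrite /P !linearB /= DTK (dagger_kernel_S Sk) linear0 oppr0 sub0r opprK subrK.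
Qed.

Lemma dagger_adjoint_exists : exists Dstar, is_adjoint ip D Dstar.
Proof. exact: adjoint_exists dagger_linear dagger_rbounded. Qed.

Variable Dstar : V -> V.
Hypothesis hDstar : is_adjoint ip D Dstar.

HB.instance Definition _ :=
  GRing.isLinear.Build R[i] V V *:%R Dstar (adjoint_linear hDstar).

Local Notation r := (opnorm D).

Lemma S_Dstar y : S (Dstar y) = y.
Proof. by apply: ip_injr => z; rewrite -hadj -hDstar DTK. Qed.

Lemma Dstar_le y : rnorm (Dstar y) <= r * rnorm y.
Proof.
apply: (adjoint_rnorm_le hDstar (opnorm_ge0 dagger_rbounded)).
exact: ler_opnorm dagger_linear dagger_rbounded.
Qed.

Definition shift_Dstar (lam : R[i]) x := x - lam *: Dstar x.

Lemma shift_Dstar_linear lam : linear (shift_Dstar lam).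
Proof.
move=> c u v; rewrite /shift_Dstar linearP scalerDr !scalerBr !scalerA mulrC.
by rewrite opprD addrACA.
Qed.

HB.instance Definition _ lam :=
  GRing.isLinear.Build R[i] V V *:%R (shift_Dstar lam) (shift_Dstar_linear lam).

Lemma S_shift_Dstar lam x : S (shift_Dstar lam x) = S x - lam *: x.
Proof. by rewrite /shift_Dstar linearB linearZ /= S_Dstar. Qed.

Lemma shift_Dstar_bounded_below lam x :
  (1 - rnorm lam * r) * rnorm x <= rnorm (shift_Dstar lam x).
Proof.
have := ler_rnormD (lam *: Dstar x) (shift_Dstar lam x).
rewrite /shift_Dstar addrC subrK rnormZ.
have := Dstar_le x; have := rnorm_ge0 lam => *; nra.
Qed.

Lemma shift_Dstar_inj lam : rnorm lam * r < 1 -> injective (shift_Dstar lam).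
Proof.
move=> lam_small x y /eqP; rewrite -subr_eq0 -linearB /= => /eqP xy0.
have lam1 : 0 < 1 - rnorm lam * r by rewrite subr_gt0.
apply/subr0_eq/rnorm0_eq0; apply/le_anti; rewrite rnorm_ge0 andbT.
have := shift_Dstar_bounded_below lam (x - y); rewrite xy0 rnorm0 => le_xy.
by rewrite -(pmulr_rle0 _ lam1).
Qed.

Lemma shift_Dstar_surj lam :
  rnorm lam * r < 1 -> forall w, exists x, shift_Dstar lam x = w.
Proof.
move=> lam_small w; have q0 : 0 <= rnorm lam * r.
  by rewrite mulr_ge0 ?rnorm_ge0 ?(opnorm_ge0 dagger_rbounded).
have [|x x_fix] :=
  contraction_fixpoint (F := fun x => w + lam *: Dstar x) q0 lam_small.
  move=> u v; rewrite opprD addrACA subrr add0r -scalerBr -linearB rnormZ -mulrA.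
  by rewrite ler_wpM2l ?rnorm_ge0 ?Dstar_le.
by exists x; rewrite /shift_Dstar -{1}x_fix addrK.
Qed.

Local Notation disc := [set z : R[i] | `|z| < (r^-1)%:C].
Local Notation eigen lam := (Defs.kernel (fun x => S x - lam *: x)).

Lemma disc_small lam : disc lam -> rnorm lam * r < 1.
Proof.
rewrite /= normE ltcR; have [->|r_pos] := eqVneq r 0; first by rewrite mulr0 ltr01.
by rewrite -ltr_pdivlMr ?div1r // lt_neqAle eq_sym r_pos (opnorm_ge0 dagger_rbounded).
Qed.

Lemma eigen_shift_Dstar lam : eigen lam = shift_Dstar lam @^-1` Defs.kernel S.
Proof. by apply/seteqP; split=> x; rewrite /preimage /Defs.kernel /= S_shift_Dstar. Qed.

Lemma eigen_dim n lam : disc lam -> dim_eq (Defs.kernel S) n -> dim_eq (eigen lam) n.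
Proof.
move=> /disc_small lam_small; rewrite eigen_shift_Dstar.
apply: (dim_eq_preimage (shift_Dstar_linear lam)).
  exact: shift_Dstar_inj.
exact: shift_Dstar_surj.
Qed.

Lemma S_shift_surj lam : disc lam -> forall y, exists x, S x - lam *: x = y.
Proof.
move=> /disc_small lam_small y; have [x xy] := shift_Dstar_surj lam_small (Dstar y).
by exists x; rewrite -S_shift_Dstar xy S_Dstar.
Qed.

Lemma disc_spectrum n : (0 < n)%N -> dim_eq (Defs.kernel S) n -> disc `<=` spectrum S.
Proof.
move=> n_pos kerS lam /eigen_dim /(_ kerS) /dim_eq_neq0 /(_ n_pos) [x x_eigen x0].
move=> /invertible_op_inj /(_ x 0); rewrite x_eigen linear0 scaler0 subr0.
by move=> /(_ erefl) x_eq0; rewrite x_eq0 eqxx in x0.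
Qed.

Lemma opnorm_dagger_gt0 x : x != 0 -> 0 < r.
Proof.
move=> x0; rewrite lt_def (opnorm_ge0 dagger_rbounded) andbT.
apply: contra_neq x0 => r0; apply: rnorm0_eq0; apply/le_anti.
rewrite rnorm_ge0 andbT -{1}(DTK x).
by apply: le_trans (ler_opnorm dagger_linear dagger_rbounded _) _; rewrite r0 mul0r.
Qed.

Lemma disc0 : 0 < r -> disc 0.
Proof. by move=> r_pos; rewrite /= normr0 ltc0R invr_gt0. Qed.

Definition orth_eigen z := forall lam, disc lam -> forall k, eigen lam k -> ip z k = 0.

Lemma orth_kernel_S_TD z : (forall k, S k = 0 -> ip z k = 0) -> T (D z) = z.
Proof.
move=> z_orth; pose e := z - T (D z).
have Se : S e = 0 by rewrite /e linearB /= hdag subrr.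
by apply/esym/subr0_eq/ipxx_eq0; rewrite -/e {1}/e ipBl z_orth // hadj Se ip0r subrr.
Qed.

Lemma orth_eigen_TD z : 0 < r -> orth_eigen z -> T (D z) = z.
Proof.
move=> r_pos z_orth; apply: orth_kernel_S_TD => k Sk.
by apply: z_orth (disc0 r_pos) _ _; rewrite /Defs.kernel /= scale0r subr0.
Qed.

Lemma orth_kernel_S_limit w : 0 < r ->
  (forall mu, disc mu -> mu != 0 -> forall k, eigen mu k -> ip w k = 0) ->
  forall k, S k = 0 -> ip w k = 0.
Proof.
(* [k] is the limit, as [t -> 0+], of the eigenvectors [(1 - t Dstar)^-1 k]
   of [S] for the eigenvalues [t]: they differ by [t Dstar (1 - t Dstar)^-1 k]. *)
move=> r_pos w_orth k Sk; apply: rnorm0_eq0; apply/le_anti; rewrite rnorm_ge0 andbT.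
have d_pos : 0 < 2^-1 / r by rewrite divr_gt0 ?invr_gt0.
apply: (le0_of_small_mul (C := rnorm w * (r * (2 * rnorm k))) d_pos) => t t0.
rewrite ler_pdivlMr // => tr; have t_ge0 := ltW t0.
have t_small : rnorm t%:C * r < 1 by rewrite rnorm_real //; lra.
have [kt ktk] := shift_Dstar_surj t_small k.
have kt_eigen : eigen t%:C kt by rewrite /Defs.kernel /= -S_shift_Dstar ktk.
have t_disc : disc t%:C.
  by rewrite /= normE ltcR rnorm_real // -div1r ltr_pdivlMr //; lra.
have t_neq0 : t%:C != 0 by rewrite -normr_gt0 normE ltc0R rnorm_real.
have wk : ip w k = - (t%:C * ip w (Dstar kt)).
  rewrite -ktk /shift_Dstar ipBr (w_orth _ t_disc t_neq0 _ kt_eigen) ipZr.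
  by rewrite conj_Creal ?complex_real ?eqxx // sub0r.
have kt_le : rnorm kt <= 2 * rnorm k.
  have := shift_Dstar_bounded_below t%:C kt; rewrite ktk rnorm_real //.
  by have := rnorm_ge0 kt; move: (rnorm kt) => a *; nra.
rewrite wk rnormN rnormM rnorm_real // ler_wpM2l //.
apply: le_trans (cauchy_schwarz _ _) _; rewrite ler_wpM2l ?rnorm_ge0 //.
apply: le_trans (Dstar_le _) _; rewrite ler_wpM2l //; exact: opnorm_ge0 dagger_rbounded.
Qed.

Lemma orth_eigen_dagger z : 0 < r -> orth_eigen z -> orth_eigen (D z).
Proof.
move=> r_pos z_orth.
have nonzero mu : disc mu -> mu != 0 -> forall k, eigen mu k -> ip (D z) k = 0.
  move=> mu_disc mu0 k k_eigen; have Sk := subr0_eq k_eigen.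
  have := z_orth _ mu_disc k k_eigen.
  rewrite -{1}(orth_eigen_TD r_pos z_orth) hadj Sk ipZr => /eqP.
  by rewrite mulf_eq0 conjC_eq0 (negPf mu0) /= => /eqP.
move=> lam lam_disc k; have [->|lam0] := eqVneq lam 0; last exact: nonzero.
by rewrite /Defs.kernel /= scale0r subr0; exact: orth_kernel_S_limit.
Qed.

Lemma orth_eigen_range z j : 0 < r -> orth_eigen z -> range (op_pow T j) z.
Proof.
move=> r_pos; elim: j z => [|j IHj] z z_orth; first by exists z.
have [y _ yDz] := IHj _ (orth_eigen_dagger r_pos z_orth).
by exists y => //; rewrite /op_pow iterS -/(op_pow T j y) yDz orth_eigen_TD.
Qed.

Lemma eigen_dense : 0 < r -> analytic_op T ->
  closure (lin_span (\bigcup_(lam in disc) eigen lam)) = setT.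
Proof.
move=> r_pos T_analytic; apply: dense_of_orth (lin_span_subspace _) _ => x x_orth.
have x_orth_eigen : orth_eigen x.
  by move=> lam lam_disc k k_eigen; apply/x_orth/sub_lin_span; exists lam.
suff : (\bigcap_(j in [set j | (1 <= j)%N]) range (op_pow T j)) x by rewrite T_analytic.
by move=> j _; exact: orth_eigen_range.
Qed.

Lemma Tstar_cowen_douglas n : (0 < n)%N -> analytic_op T ->
  fredholm_index T (- n%:Z) -> cowen_douglas n disc S.
Proof.
move=> n_pos T_analytic /codim_range_of_index /kernel_S_dim kerS.
have [x _ x0] := dim_eq_neq0 kerS n_pos.
split.
- exact: disc_spectrum n_pos kerS.
- exact: S_shift_surj.
- by move=> lam /eigen_dim; apply.
- exact: eigen_dense (opnorm_dagger_gt0 x0) T_analytic.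
Qed.

End CowenDouglas.
End InnerProduct.

Theorem proposition3p11 (R : realType) (V : completeNormedModType R[i])
  (ip : V -> V -> R[i]) (hip : is_inner_product ip)
  (T Tstar Tdag : V -> V) (n : nat)
  (hT : bounded_op T) (hTstar : bounded_op Tstar) (hadj : is_adjoint ip T Tstar)
  (hdag : forall x, Tstar (T (Tdag x)) = Tstar x)
  (hli : left_invertible T) (han : analytic_op T)
  (hn : (0 < n)%N) (hind : fredholm_index T (- n%:Z)) :
  cowen_douglas n [set z : R[i] | `|z| < (real_complex R (opnorm Tdag)^-1)] Tstar.
Proof.
have [Dstar hDstar] := dagger_adjoint_exists hip hT hTstar hadj hdag hli.
exact (Tstar_cowen_douglas hip hT hTstar hadj hdag hli hDstar hn han hind).
Qed.
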